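(* Let $X,Y$ be countable discrete metric spaces and $d,d'\in D(X,Y)$. Consider the conditions: (i) $d$ and $d'$ are coarsely equivalent, i.e. there is a nondecreasing function $\varphi:[0,\infty)\to[0,\infty)$ with $d'(x,y)\le\varphi(d(x,y))$ and $d(x,y)\le\varphi(d'(x,y))$ for all $x\in X$, $y\in Y$; (ii) $M_{d'}(X,Y)=M_d(X,Y)$. Then (i) implies (ii). If moreover $X$ and $Y$ are uniformly discrete ($\inf_{x\ne x'}d_X(x,x')>0$, similarly for $Y$) and proper (every ball contains finitely many points), then (ii) implies (i).
   Context: $H_X=l^2(X)$ with basis $\{\delta_x\}$. $D(X,Y)$ is the set of metrics on $X\sqcup Y$ restricting to $d_X$ and $d_Y$. For $T:H_X\to H_Y$ bounded, $T_{yx}=\langle T\delta_x,\delta_y\rangle$; $T$ has propagation less than $L$ w.r.t. $d$ if $T_{yx}=0$ whenever $d(x,y)\ge L$. $M_d(X,Y)$ is the norm closure in $\mathbb B(H_X,H_Y)$ of the bounded operators of finite propagation w.r.t. $d$. *)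

From Stdlib Require Import Reals List ClassicalEpsilon.
Import ListNotations.
Open Scope R_scope.

Definition C : Type := (R * R)%type.
Definition C0 : C := (0, 0).
Definition C1 : C := (1, 0).
Definition Cadd (z w : C) : C := (fst z + fst w, snd z + snd w).
Definition Csub (z w : C) : C := (fst z - fst w, snd z - snd w).
Definition Cmul (z w : C) : C :=
  (fst z * fst w - snd z * snd w, fst z * snd w + snd z * fst w).
Definition Cnorm2 (z : C) : R := fst z * fst z + snd z * snd z.

Definition is_metric {T : Type} (d : T -> T -> R) : Prop :=
  (forall a b, 0 <= d a b) /\
  (forall a b, d a b = 0 <-> a = b) /\
  (forall a b, d a b = d b a) /\
  (forall a b c, d a c <= d a b + d b c).

Definition countable (T : Type) : Prop := exists f : T -> nat, forall a b, f a = f b -> a = b.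

Definition discrete_metric {T : Type} (d : T -> T -> R) : Prop :=
  forall x, exists e, 0 < e /\ forall x', d x x' < e -> x' = x.

Definition uniformly_discrete {T : Type} (d : T -> T -> R) : Prop :=
  exists c, 0 < c /\ forall x x', x <> x' -> c <= d x x'.

Definition proper_metric {T : Type} (d : T -> T -> R) : Prop :=
  forall x r, exists l : list T, forall x', d x x' <= r -> In x' l.

Definition in_D {X Y : Type} (dX : X -> X -> R) (dY : Y -> Y -> R)
  (d : (X + Y) -> (X + Y) -> R) : Prop :=
  is_metric d /\
  (forall x x', d (inl x) (inl x') = dX x x') /\
  (forall y y', d (inr y) (inr y') = dY y y').

Definition coarsely_equivalent {X Y : Type} (d d' : (X + Y) -> (X + Y) -> R) : Prop :=
  exists phi : R -> R,
    (forall t, 0 <= t -> 0 <= phi t) /\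
    (forall s t, 0 <= s -> s <= t -> phi s <= phi t) /\
    (forall x y, d' (inl x) (inr y) <= phi (d (inl x) (inr y))) /\
    (forall x y, d (inl x) (inr y) <= phi (d' (inl x) (inr y))).

Fixpoint sumsq {T : Type} (f : T -> C) (l : list T) : R :=
  match l with
  | [] => 0
  | a :: l' => Cnorm2 (f a) + sumsq f l'
  end.

Definition l2 {T : Type} (f : T -> C) : Prop :=
  exists B, forall l : list T, NoDup l -> sumsq f l <= B.

(** ||g|| <= c ||f|| : every finite partial sum of |g|^2 is at most c^2 times
    every upper bound of the finite partial sums of |f|^2 (i.e. c^2 ||f||^2) *)
Definition norm_le {S T : Type} (g : T -> C) (c : R) (f : S -> C) : Prop :=
  forall l : list T, NoDup l ->
  forall B, (forall l' : list S, NoDup l' -> sumsq f l' <= B) ->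
  sumsq g l <= c * c * B.

Definition Op (X Y : Type) : Type := (X -> C) -> (Y -> C).

Definition linear_on_l2 {X Y : Type} (T : Op X Y) : Prop :=
  forall (a : C) (f g : X -> C), l2 f -> l2 g ->
  forall y, T (fun x => Cadd (Cmul a (f x)) (g x)) y = Cadd (Cmul a (T f y)) (T g y).

Definition bounded_op {X Y : Type} (T : Op X Y) : Prop :=
  linear_on_l2 T /\ exists c, 0 <= c /\ forall f, l2 f -> norm_le (T f) c f.

Definition delta {X : Type} (x : X) : X -> C :=
  fun x' => if excluded_middle_informative (x' = x) then C1 else C0.

(** matrix coefficient T_{yx} = <T δ_x, δ_y> = (T δ_x)(y) *)
Definition coef {X Y : Type} (T : Op X Y) (y : Y) (x : X) : C := T (delta x) y.

Definition finite_propagation {X Y : Type} (d : (X + Y) -> (X + Y) -> R) (T : Op X Y) : Prop :=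
  exists L, forall x y, L <= d (inl x) (inr y) -> coef T y x = C0.

Definition in_M {X Y : Type} (d : (X + Y) -> (X + Y) -> R) (T : Op X Y) : Prop :=
  bounded_op T /\
  forall eps, 0 < eps ->
    exists S : Op X Y, bounded_op S /\ finite_propagation d S /\
      forall f, l2 f -> norm_le (fun y => Csub (T f y) (S f y)) eps f.

Definition M_equal {X Y : Type} (d d' : (X + Y) -> (X + Y) -> R) : Prop :=
  forall T : Op X Y, in_M d' T <-> in_M d T.

From Pilot Require Import Defs.
From Stdlib Require Import Reals Lra Lia List Classical ClassicalEpsilon ZArith.
Import ListNotations.
Open Scope R_scope.

(** If d' <= phi(d) with phi nondecreasing, an operator whose
    matrix vanishes where d >= L vanishes where d' >= phi(L) + 1; so finite
    propagation for d implies it for d', and M_d is contained in M_d'.  By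
    symmetry the two algebras agree.

    Say d' is [controlled] by d if d' is bounded on every set
    {d <= r}.  Control in both directions yields a nondecreasing phi, built as
    a running maximum of the bounds.  If control fails, pick pairs (x_k, y_k)
    with d(x_k, y_k) <= R0 and d'(x_k, y_k) increasing by more than 2 R0 at
    each step; the triangle inequality forces the x_k, and the y_k, to be
    pairwise distinct.  The partial translation T delta_{x_k} = delta_{y_k} is
    then an operator of norm <= 1 with d-propagation <= R0, hence in M_d, but
    its matrix entries 1 at pairs of unbounded d'-distance keep it at distance
    >= 1 from every operator of finite d'-propagation, so it is not in M_d'. *)

Definition nup (t : R) : nat := Z.to_nat (up t).

Lemma nup_gt t : t < INR (nup t).
Proof.
  unfold nup. destruct (archimed t) as [Hup _].
  destruct (Z_lt_le_dec (up t) 0) as [Hneg | Hnonneg].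
  - replace (Z.to_nat (up t)) with 0%nat by lia. apply IZR_lt in Hneg. simpl. lra.
  - rewrite INR_IZR_INZ, Z2Nat.id by lia. lra.
Qed.

Lemma nup_mono s t : s <= t -> (nup s <= nup t)%nat.
Proof.
  intros Hst. unfold nup.
  assert (Hup : (up s <= up t)%Z).
  { destruct (archimed s), (archimed t).
    destruct (Z_le_gt_dec (up s) (up t)) as [| Hgt]; auto.
    assert (Hz : (up t <= up s - 1)%Z) by lia. apply IZR_le in Hz.
    rewrite minus_IZR in Hz. lra. }
  lia.
Qed.

Fixpoint runmax (b : nat -> R) (n : nat) : R :=
  match n with
  | O => Rmax 0 (b O)
  | S m => Rmax (runmax b m) (b (S m))
  end.

Lemma runmax_nonneg b n : 0 <= runmax b n.
Proof.
  induction n as [| n IH]; simpl; [apply Rmax_l |].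
  eapply Rle_trans; [exact IH | apply Rmax_l].
Qed.

Lemma runmax_ge b n : b n <= runmax b n.
Proof. destruct n; simpl; apply Rmax_r. Qed.

Lemma runmax_mono b m n : (m <= n)%nat -> runmax b m <= runmax b n.
Proof.
  induction 1 as [| n _ IH]; [lra |].
  simpl. eapply Rle_trans; [exact IH | apply Rmax_l].
Qed.

Lemma Cnorm2_C0 : Cnorm2 C0 = 0.
Proof. unfold Cnorm2, C0; simpl; lra. Qed.

Lemma sumsq_zero {T : Type} (g : T -> Defs.C) (l : list T) :
  (forall t, Cnorm2 (g t) = 0) -> sumsq g l = 0.
Proof. intros Hg. induction l as [| a l IH]; simpl; auto. rewrite Hg, IH; lra. Qed.

Lemma delta_same {T : Type} (x : T) : delta x x = Defs.C1.
Proof. unfold delta. destruct (excluded_middle_informative (x = x)); tauto. Qed.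

Lemma delta_other {T : Type} (x a : T) : a <> x -> delta x a = C0.
Proof. intros Hax. unfold delta. destruct (excluded_middle_informative (a = x)); tauto. Qed.

Lemma sumsq_delta {T : Type} (x : T) (l : list T) : NoDup l ->
  sumsq (delta x) l <= 1 /\ (~ In x l -> sumsq (delta x) l = 0).
Proof.
  induction 1 as [| a l Ha _ [IHle IHout]]; simpl; [split; [lra | auto] |].
  destruct (classic (a = x)) as [-> | Hax].
  - rewrite delta_same, (IHout Ha). unfold Cnorm2, Defs.C1; simpl.
    split; [lra | intros Hn; exfalso; auto].
  - rewrite delta_other, Cnorm2_C0 by exact Hax. split; [lra |]. intros Hn.
    rewrite IHout; [lra | intros Hin; apply Hn; right; exact Hin].
Qed.

Lemma delta_l2 {T : Type} (x : T) : l2 (delta x).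
Proof. exists 1. intros l Hl. apply (sumsq_delta x l Hl). Qed.

Section Transfer.
Context {X Y : Type} (d d' : (X + Y) -> (X + Y) -> R) (phi : R -> R).
Hypothesis d_nonneg : forall a b, 0 <= d a b.
Hypothesis phi_mono : forall s t, 0 <= s -> s <= t -> phi s <= phi t.
Hypothesis d'_controlled : forall x y, d' (inl x) (inr y) <= phi (d (inl x) (inr y)).

Lemma finite_propagation_transfer (S : Op X Y) :
  finite_propagation d S -> finite_propagation d' S.
Proof.
  intros [L HL]. exists (phi (Rmax L 0) + 1). intros x y Hfar.
  destruct (Rle_lt_dec L (d (inl x) (inr y))) as [HLe | Hlt]; [auto |].
  exfalso.
  pose proof (phi_mono _ (Rmax L 0) (d_nonneg (inl x) (inr y))
    (Rlt_le _ _ (Rlt_le_trans _ _ _ Hlt (Rmax_l _ _)))).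
  pose proof (d'_controlled x y). lra.
Qed.

Lemma in_M_transfer (T : Op X Y) : in_M d T -> in_M d' T.
Proof.
  intros [Hb Happrox]. split; [exact Hb |]. intros eps Heps.
  destruct (Happrox eps Heps) as [S [HSb [HSfp HSnear]]].
  exists S. split; [exact HSb | split; [apply finite_propagation_transfer, HSfp | exact HSnear]].
Qed.

End Transfer.

Lemma coarse_M_equal {X Y : Type} (d d' : (X + Y) -> (X + Y) -> R) :
  (forall a b, 0 <= d a b) -> (forall a b, 0 <= d' a b) ->
  coarsely_equivalent d d' -> M_equal d d'.
Proof.
  intros Hd0 Hd'0 [phi [_ [Hmono [Hd'd Hdd']]]] T.
  split; apply in_M_transfer with phi; auto.
Qed.

Definition controlled {X Y : Type} (d d' : (X + Y) -> (X + Y) -> R) : Prop :=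
  forall r, exists B, forall x y, d (inl x) (inr y) <= r -> d' (inl x) (inr y) <= B.

(** Mutual control is exactly coarse equivalence: phi is the running maximum
    of the bounds at integer radii, evaluated at the next integer. *)
Lemma controlled_coarse {X Y : Type} (d d' : (X + Y) -> (X + Y) -> R) :
  controlled d d' -> controlled d' d -> coarsely_equivalent d d'.
Proof.
  intros H1 H2.
  destruct (choice _ H1) as [b1 Hb1]. destruct (choice _ H2) as [b2 Hb2].
  set (b n := Rmax (b1 (INR n)) (b2 (INR n))).
  exists (fun t => runmax b (nup t)). split; [| split; [| split]].
  - intros t _. apply runmax_nonneg.
  - intros s t _ Hst. apply runmax_mono, nup_mono, Hst.
  - intros x y. set (n := nup (d (inl x) (inr y))).
    pose proof (Hb1 (INR n) x y (Rlt_le _ _ (nup_gt _))).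
    pose proof (runmax_ge b n). pose proof (Rmax_l (b1 (INR n)) (b2 (INR n))).
    unfold b in *. lra.
  - intros x y. set (n := nup (d' (inl x) (inr y))).
    pose proof (Hb2 (INR n) x y (Rlt_le _ _ (nup_gt _))).
    pose proof (runmax_ge b n). pose proof (Rmax_r (b1 (INR n)) (b2 (INR n))).
    unfold b in *. lra.
Qed.

Lemma not_controlled_unbounded {X Y : Type} (d d' : (X + Y) -> (X + Y) -> R) :
  ~ controlled d d' ->
  exists R0, forall B, exists p : X * Y,
    d (inl (fst p)) (inr (snd p)) <= R0 /\ B < d' (inl (fst p)) (inr (snd p)).
Proof.
  intros Hnot. apply not_all_ex_not in Hnot as [R0 HR0]. exists R0.
  intros B. apply NNPP. intros Hnone. apply HR0. exists B. intros x y Hxy.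
  apply Rnot_lt_le. intros Hlt. apply Hnone. exists (x, y). auto.
Qed.

(** Two metrics in D(X,Y) agree on X and on Y, so moving one endpoint of a
    pair changes d' by at most the d-lengths of the two pairs involved. *)
Lemma cross_shared_fst {X Y : Type} dX dY (d d' : (X + Y) -> (X + Y) -> R) :
  in_D dX dY d -> in_D dX dY d' -> forall x y y',
  d' (inl x) (inr y') <= d' (inl x) (inr y) + d (inl x) (inr y) + d (inl x) (inr y').
Proof.
  intros [[_ [_ [Hsym Htri]]] [_ HdY]] [[_ [_ [_ Htri']]] [_ Hd'Y]] x y y'.
  pose proof (Htri' (inl x) (inr y) (inr y')) as Hvia_y. rewrite Hd'Y, <- HdY in Hvia_y.
  pose proof (Htri (inr y) (inl x) (inr y')) as Hvia_x. rewrite (Hsym (inr y) (inl x)) in Hvia_x.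
  lra.
Qed.

Lemma cross_shared_snd {X Y : Type} dX dY (d d' : (X + Y) -> (X + Y) -> R) :
  in_D dX dY d -> in_D dX dY d' -> forall x x' y,
  d' (inl x') (inr y) <= d' (inl x) (inr y) + d (inl x) (inr y) + d (inl x') (inr y).
Proof.
  intros [[_ [_ [Hsym Htri]]] [HdX _]] [[_ [_ [_ Htri']]] [Hd'X _]] x x' y.
  pose proof (Htri' (inl x') (inl x) (inr y)) as Hvia_x. rewrite Hd'X, <- HdX in Hvia_x.
  pose proof (Htri (inl x') (inr y) (inl x)) as Hvia_y. rewrite (Hsym (inr y) (inl x)) in Hvia_y.
  lra.
Qed.

Section PartialTranslation.
Context {X Y : Type} (xs : nat -> X) (ys : nat -> Y).
Hypothesis xs_inj : forall j k, xs j = xs k -> j = k.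
Hypothesis ys_inj : forall j k, ys j = ys k -> j = k.

(** The operator sending delta_{xs k} to delta_{ys k} and killing the rest. *)
Definition translation : Op X Y := fun f y =>
  match excluded_middle_informative (exists k, ys k = y) with
  | left H => f (xs (proj1_sig (constructive_indefinite_description _ H)))
  | right _ => C0
  end.

Lemma translation_at f k : translation f (ys k) = f (xs k).
Proof.
  unfold translation. destruct (excluded_middle_informative _) as [H | H].
  - destruct (constructive_indefinite_description _ H) as [k' Hk']; simpl.
    apply ys_inj in Hk' as ->. reflexivity.
  - exfalso; eauto.
Qed.

Lemma translation_off f y : ~ (exists k, ys k = y) -> translation f y = C0.
Proof. intros Hn. unfold translation. destruct (excluded_middle_informative _); tauto. Qed.

Lemma translation_sumsq f l : NoDup l ->
  exists l', NoDup l' /\ (forall x, In x l' -> exists k, xs k = x /\ In (ys k) l) /\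
             sumsq (translation f) l = sumsq f l'.
Proof.
  induction 1 as [| y l Hy _ [l' [Hnd [Hsrc Hsum]]]].
  - exists []. repeat split; [constructor | contradiction].
  - destruct (classic (exists k, ys k = y)) as [[k <-] | Hn].
    + exists (xs k :: l'). repeat split.
      * constructor; auto. intros Hin. destruct (Hsrc _ Hin) as [k' [E Hk']].
        apply xs_inj in E as ->. contradiction.
      * intros x [<- | Hin]; [exists k; simpl; auto |].
        destruct (Hsrc _ Hin) as [k' [E Hk']]. exists k'; simpl; auto.
      * simpl. rewrite Hsum, translation_at. reflexivity.
    + exists l'. repeat split; auto.
      * intros x Hin. destruct (Hsrc _ Hin) as [k' [E Hk']]. exists k'; simpl; auto.
      * simpl. rewrite translation_off, Cnorm2_C0, Hsum by exact Hn. lra.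
Qed.

Lemma translation_bounded : bounded_op translation.
Proof.
  split.
  - intros a f g _ _ y. unfold translation.
    destruct (excluded_middle_informative _); auto.
    unfold Cadd, Cmul, C0; simpl. f_equal; ring.
  - exists 1. split; [lra |]. intros f _ l Hl B HB.
    destruct (translation_sumsq f l Hl) as [l' [Hnd [_ ->]]].
    specialize (HB l' Hnd). lra.
Qed.

(** If the pairs are uniformly d-close, T has finite d-propagation, hence
    lies in M_d (it approximates itself). *)
Lemma translation_in_M (d : (X + Y) -> (X + Y) -> R) (R0 : R) :
  (forall k, d (inl (xs k)) (inr (ys k)) <= R0) -> in_M d translation.
Proof.
  intros Hnear. split; [apply translation_bounded |]. intros eps Heps.
  exists translation. split; [apply translation_bounded | split].
  - exists (R0 + 1). intros x y Hfar. unfold coef.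
    destruct (classic (exists k, ys k = y)) as [[k <-] | Hn].
    + rewrite translation_at. unfold delta.
      destruct (excluded_middle_informative (xs k = x)) as [<- |]; auto.
      pose proof (Hnear k). lra.
    + apply translation_off, Hn.
  - intros f _ l Hl B HB. rewrite sumsq_zero.
    + specialize (HB [] (NoDup_nil _)). simpl in HB. nra.
    + intros y. unfold Cnorm2, Csub; simpl. ring.
Qed.

(** If the pairs have unbounded d'-length, every S of finite d'-propagation
    has S_{ys k, xs k} = 0 for some k, while T_{ys k, xs k} = 1; testing on
    delta_{xs k} gives ||T - S|| >= 1, so T is not in M_d'. *)
Lemma translation_not_in_M (d' : (X + Y) -> (X + Y) -> R) :
  (forall L, exists k, L <= d' (inl (xs k)) (inr (ys k))) -> ~ in_M d' translation.
Proof.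
  intros Hfar [_ Happrox].
  destruct (Happrox (1/2)) as [S [_ [[L HL] Hnear]]]; [lra |].
  destruct (Hfar L) as [k Hk].
  assert (Hzero : coef S (ys k) (xs k) = C0) by exact (HL _ _ Hk).
  assert (Hnd : NoDup [ys k]) by (constructor; [simpl; tauto | constructor]).
  specialize (Hnear (delta (xs k)) (delta_l2 _) [ys k] Hnd 1
                (fun l' Hl' => proj1 (sumsq_delta (xs k) l' Hl'))).
  unfold coef in Hzero. simpl in Hnear. rewrite translation_at, Hzero in Hnear.
  unfold delta in Hnear. destruct (excluded_middle_informative (xs k = xs k)); [| tauto].
  unfold Cnorm2, Csub, Defs.C1, C0 in Hnear; simpl in Hnear. lra.
Qed.

End PartialTranslation.

Lemma injective_of_lt {T : Type} (f : nat -> T) :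
  (forall j k, (j < k)%nat -> f j <> f k) -> forall j k, f j = f k -> j = k.
Proof.
  intros Hlt j k E. destruct (lt_eq_lt_dec j k) as [[H | H] | H]; auto.
  - exfalso; exact (Hlt _ _ H E).
  - exfalso; exact (Hlt _ _ H (eq_sym E)).
Qed.

Section SeparatingSequence.
Context {X Y : Type} (dX : X -> X -> R) (dY : Y -> Y -> R)
  (d d' : (X + Y) -> (X + Y) -> R) (R0 : R).
Hypotheses (Hd : in_D dX dY d) (Hd' : in_D dX dY d').
Hypothesis unbounded : forall B, exists p : X * Y,
  d (inl (fst p)) (inr (snd p)) <= R0 /\ B < d' (inl (fst p)) (inr (snd p)).

Definition len (e : (X + Y) -> (X + Y) -> R) (p : X * Y) : R := e (inl (fst p)) (inr (snd p)).

Definition pick (B : R) : X * Y := proj1_sig (constructive_indefinite_description _ (unbounded B)).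

Lemma pick_spec B : len d (pick B) <= R0 /\ B < len d' (pick B).
Proof. exact (proj2_sig (constructive_indefinite_description _ (unbounded B))). Qed.

Fixpoint pairs (k : nat) : X * Y :=
  match k with
  | O => pick 0
  | S k => pick (len d' (pairs k) + 2 * R0 + 1)
  end.

Lemma pairs_short k : len d (pairs k) <= R0.
Proof. destruct k; apply pick_spec. Qed.

Lemma R0_nonneg : 0 <= R0.
Proof.
  destruct Hd as [[Hnonneg _] _].
  pose proof (pairs_short 0). pose proof (Hnonneg (inl (fst (pairs 0))) (inr (snd (pairs 0)))).
  unfold len in *. lra.
Qed.

Lemma pairs_gap j k : (j < k)%nat -> len d' (pairs j) + 2 * R0 + 1 < len d' (pairs k).
Proof.
  pose proof R0_nonneg. induction 1 as [| k _ IH].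
  - apply pick_spec.
  - pose proof (proj2 (pick_spec (len d' (pairs k) + 2 * R0 + 1))). simpl. lra.
Qed.

Lemma pairs_unbounded L : exists k, L <= len d' (pairs k).
Proof.
  assert (Hgrow : forall k, INR k < len d' (pairs k)).
  { pose proof R0_nonneg. induction k as [| k IH].
    - exact (proj2 (pick_spec 0)).
    - rewrite S_INR. pose proof (pairs_gap k (S k) (Nat.lt_succ_diag_r k)). lra. }
  exists (nup L). pose proof (nup_gt L). pose proof (Hgrow (nup L)). lra.
Qed.

(** The gaps exceed 2 R0, so two pairs never share an endpoint. *)
Lemma pairs_fst_inj : forall j k, fst (pairs j) = fst (pairs k) -> j = k.
Proof.
  apply injective_of_lt. intros j k Hjk E.
  pose proof (pairs_gap j k Hjk). pose proof (pairs_short j). pose proof (pairs_short k).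
  pose proof (cross_shared_fst dX dY d d' Hd Hd' (fst (pairs j)) (snd (pairs j)) (snd (pairs k))).
  unfold len in *. rewrite E in *. lra.
Qed.

Lemma pairs_snd_inj : forall j k, snd (pairs j) = snd (pairs k) -> j = k.
Proof.
  apply injective_of_lt. intros j k Hjk E.
  pose proof (pairs_gap j k Hjk). pose proof (pairs_short j). pose proof (pairs_short k).
  pose proof (cross_shared_snd dX dY d d' Hd Hd' (fst (pairs j)) (fst (pairs k)) (snd (pairs j))).
  unfold len in *. rewrite E in *. lra.
Qed.

Lemma separating_operator : exists T : Op X Y, in_M d T /\ ~ in_M d' T.
Proof.
  set (xs k := fst (pairs k)). set (ys k := snd (pairs k)).
  exists (translation xs ys). split.
  - apply (translation_in_M xs ys pairs_fst_inj pairs_snd_inj d R0), pairs_short.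
  - apply (translation_not_in_M xs ys pairs_snd_inj d'), pairs_unbounded.
Qed.

End SeparatingSequence.

Lemma M_equal_controlled {X Y : Type} dX dY (d d' : (X + Y) -> (X + Y) -> R) :
  in_D dX dY d -> in_D dX dY d' -> M_equal d d' -> controlled d d'.
Proof.
  intros Hd Hd' HM. apply NNPP. intros Hnot.
  destruct (not_controlled_unbounded d d' Hnot) as [R0 Hunb].
  destruct (separating_operator dX dY d d' R0 Hd Hd' Hunb) as [T [HTd HTd']].
  apply HTd', HM, HTd.
Qed.

Lemma M_equal_sym {X Y : Type} (d d' : (X + Y) -> (X + Y) -> R) :
  M_equal d d' -> M_equal d' d.
Proof. intros HM T. symmetry. apply HM. Qed.

Theorem mainTheorem4 (X Y : Type) (dX : X -> X -> R) (dY : Y -> Y -> R)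
  (HXc : countable X) (HYc : countable Y)
  (HXm : is_metric dX) (HYm : is_metric dY)
  (HXd : discrete_metric dX) (HYd : discrete_metric dY)
  (d d' : (X + Y) -> (X + Y) -> R)
  (Hd : in_D dX dY d) (Hd' : in_D dX dY d') :
  (coarsely_equivalent d d' -> M_equal d d') /\
  (uniformly_discrete dX -> uniformly_discrete dY ->
   proper_metric dX -> proper_metric dY ->
   M_equal d d' -> coarsely_equivalent d d').
Proof.
  split.
  - apply coarse_M_equal; [apply Hd | apply Hd'].
  - intros _ _ _ _ HM. apply controlled_coarse.
    + exact (M_equal_controlled dX dY d d' Hd Hd' HM).
    + exact (M_equal_controlled dX dY d' d Hd' Hd (M_equal_sym d d' HM)).
Qed.
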